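(* For every integer $n\geq 1$, the polynomial $L_n(q)=\sum_{s=0}^{n} L_{n,s}\,q^s$ is unimodal; that is, there is an index $m$ with $L_{n,0}\leq L_{n,1}\leq\cdots\leq L_{n,m}\geq L_{n,m+1}\geq\cdots\geq L_{n,n}$.
   Context: A linear chord diagram with $n$ chords is a partition of $[2n]=\{1,2,\dots,2n\}$ into $n$ blocks of size two, called chords (equivalently, a perfect matching of $[2n]$). For a chord $\{a,b\}$ with $a<b$, its length is $b-a$. A short chord is a chord of length one, i.e. a chord of the form $\{i,i+1\}$. For $0\le s\le n$, $L_{n,s}$ denotes the number of linear chord diagrams with $n$ chords having exactly $s$ short chords. *)

From mathcomp Require Import all_boot.
Set Implicit Arguments. Unset Strict Implicit. Unset Printing Implicit Defensive.

(* Points of [2n] are represented by 'I_(2*n) = {0,...,2n-1} (a shift by one,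
   which preserves chord lengths). A linear chord diagram is a partition of
   [2n] into blocks of size two. *)
Definition chord_diagram (n : nat) (P : {set {set 'I_(2 * n)}}) : bool :=
  partition P [set: 'I_(2 * n)] && [forall B in P, #|B| == 2].

Definition short_chord (n : nat) (B : {set 'I_(2 * n)}) : bool :=
  [exists i : 'I_(2 * n), exists j : 'I_(2 * n),
     (nat_of_ord j == (nat_of_ord i).+1) && (B == [set i; j])].

Definition num_short (n : nat) (P : {set {set 'I_(2 * n)}}) : nat :=
  #|[set B in P | short_chord B]|.

Definition L (n s : nat) : nat :=
  #|[set P : {set {set 'I_(2 * n)}} | chord_diagram P && (num_short P == s)]|.

From Stdlib Require Import ZArith Lia.
From mathcomp Require Import all_boot zify.
Set Implicit Arguments. Unset Strict Implicit. Unset Printing Implicit Defensive.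

(* The polynomial L_n(q) is unimodal with its mode at 1:
     L_{n,0} <= L_{n,1} >= L_{n,2} >= ... >= L_{n,n}.
   1. A chord diagram on N points is the same as a fixed-point-free
      involution f of 'I_N (each point goes to its partner); its short chords
      are the points x with f x = x + 1.
   2. Every diagram on N + 2 points is obtained in exactly one way by
      inserting a chord {0, j+1} (0 <= j <= N) into a diagram on N points.
      The insertion creates a short chord iff j = 0 and destroys the short
      chord {j-1, j} if there is one.  Counting insertion positions gives
        L_{m+1,s} = L_{m,s-1} + (s+1) L_{m,s+1} + (2m-s) L_{m,s}.
   3. From this recurrence, induction on m yields the linear relation
        (s+1)(s+2) L_{m,s+2} + (s+1)(2m-2-s) L_{m,s+1} = 2(m-s) L_{m,s},
      which gives L_{m+1,1} = L_{m+1,0} + L_{m,0} and L_{n,2} <= L_{n,1}.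
   4. The inequalities L_{n,i+1} <= L_{n,i} for i >= 1 then propagate along
      the recurrence by induction on n. *)

(* Insertion and removal of a chord through the first point are plain
   arithmetic renumberings, so they are carried out on functions nat -> nat;
   [fpf_involution N F] says that F restricts to a fixed-point-free
   involution of [0, N). *)
Definition fpf_involution (N : nat) (F : nat -> nat) :=
  forall y, y < N -> [/\ F y < N, F (F y) = y & F y <> y].

(* When the chord {0, j+1} is inserted, the old point y becomes
   [shift_up j y]; [shift_down j] is the inverse renumbering. *)
Definition shift_up (j y : nat) := if y < j then y.+1 else y.+2.
Definition shift_down (j x : nat) := if x <= j then x.-1 else x - 2.

Definition insert_chord (F : nat -> nat) (j x : nat) :=
  if x == 0 then j.+1
  else if x == j.+1 then 0
  else shift_up j (F (shift_down j x)).

(* Removing the chord through 0, whose other end is (G 0).-1 + 1. *)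
Definition remove_chord (G : nat -> nat) (y : nat) :=
  shift_down (G 0).-1 (G (shift_up (G 0).-1 y)).

Ltac case_ifs := repeat match goal with |- context [if ?b then _ else _] => case: ifP end.

Lemma shift_upK j : cancel (shift_up j) (shift_down j).
Proof. by move=> y; rewrite /shift_down /shift_up; case_ifs; lia. Qed.

Lemma shift_downK j x : x != 0 -> x != j.+1 -> shift_up j (shift_down j x) = x.
Proof. rewrite /shift_down /shift_up; case_ifs; lia. Qed.

Lemma shift_up_neq0 j y : (shift_up j y == 0) = false.
Proof. rewrite /shift_up; case_ifs; lia. Qed.

Lemma shift_up_neqS j y : (shift_up j y == j.+1) = false.
Proof. rewrite /shift_up; case_ifs; lia. Qed.

Lemma shift_up_lt j y N : y < N -> shift_up j y < N.+2.
Proof. rewrite /shift_up; case_ifs; lia. Qed.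

Lemma shift_down_lt j x N :
  j <= N -> x < N.+2 -> x != 0 -> x != j.+1 -> shift_down j x < N.
Proof. rewrite /shift_down; case_ifs; lia. Qed.

Lemma insert_chord_fpf N F j :
  fpf_involution N F -> j <= N -> fpf_involution N.+2 (insert_chord F j).
Proof.
move=> HF hj x hx; rewrite /insert_chord.
case: eqP => [->|/eqP x0]; first by rewrite eqxx; split; [lia | done | lia].
case: eqP => [->|/eqP xS]; first by rewrite eqxx; split; [lia | done | lia].
have [Fy_lt FFy Fy_neq] := HF _ (shift_down_lt hj hx x0 xS).
rewrite shift_up_neq0 shift_up_neqS shift_upK FFy shift_downK //.
split => //; first exact: shift_up_lt.
by move=> e; apply: Fy_neq; rewrite -(shift_upK j (F _)) e.
Qed.

Lemma remove_chord_fpf N G :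
  fpf_involution N.+2 G -> (G 0).-1 <= N /\ fpf_involution N (remove_chord G).
Proof.
move=> HG; have [G0_lt GG0 G0_neq] := HG 0 (ltac:(lia)).
split; first lia.
set j := (G 0).-1; have G0 : G 0 = j.+1 by rewrite /j; lia.
move=> y hy; rewrite /remove_chord -/j.
set x := shift_up j y.
have hx : x < N.+2 by exact: shift_up_lt.
have x0 : x != 0 by rewrite /x shift_up_neq0.
have xS : x != j.+1 by rewrite /x shift_up_neqS.
have [Gx_lt GGx Gx_neq] := HG x hx.
have Gx0 : G x != 0 by apply/eqP => e; move/eqP: xS; apply; rewrite -GGx e.
have GxS : G x != j.+1 by apply/eqP => e; move/eqP: x0; apply; rewrite -GGx e -G0 GG0.
split.
- by apply: shift_down_lt => //; lia.
- by rewrite shift_downK // GGx /x shift_upK.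
- by move=> e; apply: Gx_neq; rewrite -(shift_downK Gx0 GxS) e.
Qed.

Lemma insert_remove_chord N G x : fpf_involution N.+2 G -> x < N.+2 ->
  insert_chord (remove_chord G) (G 0).-1 x = G x.
Proof.
move=> HG hx; have [G0_lt GG0 G0_neq] := HG 0 (ltac:(lia)).
set j := (G 0).-1; have G0 : G 0 = j.+1 by rewrite /j; lia.
rewrite /insert_chord /remove_chord -/j.
case: eqP => [->|/eqP x0]; first by rewrite G0.
case: eqP => [->|/eqP xS]; first by rewrite -G0 GG0.
have [_ GGx _] := HG x hx.
have Gx0 : G x != 0 by apply/eqP => e; move/eqP: xS; apply; rewrite -GGx e G0.
have GxS : G x != j.+1 by apply/eqP => e; move/eqP: x0; apply; rewrite -GGx e -G0 GG0.
by rewrite (shift_downK x0 xS) shift_downK.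
Qed.

Lemma remove_insert_chord F j y : remove_chord (insert_chord F j) y = F y.
Proof.
have e0 : insert_chord F j 0 = j.+1 by [].
by rewrite /remove_chord e0 /= /insert_chord shift_up_neq0 shift_up_neqS !shift_upK.
Qed.

Definition short_count (N : nat) (F : nat -> nat) :=
  count (fun x => F x == x.+1) (iota 0 N).

Lemma count_iota_insert (p : pred nat) j N : j <= N ->
  count p (iota 0 N.+2) = p 0 + p j.+1 + count (p \o shift_up j) (iota 0 N).
Proof.
move=> hj.
have -> : iota 0 N.+2 = 0 :: iota 1 j ++ j.+1 :: iota j.+2 (N - j).
  rewrite (_ : N.+2 = (j + (N - j).+1).+1); last by lia.
  by rewrite /= iotaD /= add1n.
have -> : count (p \o shift_up j) (iota 0 N) = count p (map (shift_up j) (iota 0 N)).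
  by rewrite count_map.
have -> : iota 0 N = iota 0 j ++ iota j (N - j) by rewrite -iotaD subnKC.
rewrite map_cat.
have -> : map (shift_up j) (iota 0 j) = iota 1 j.
  rewrite (iotaDl 1 0); apply/eq_in_map => y.
  by rewrite mem_iota /shift_up => /andP[_ ->]; rewrite add1n.
have -> : map (shift_up j) (iota j (N - j)) = iota j.+2 (N - j).
  rewrite -addn2 addnC (iotaDl 2 j); apply/eq_in_map => y.
  by rewrite mem_iota /shift_up => /andP[hy _]; rewrite ltnNge hy /= add2n.
rewrite /= !count_cat /=; lia.
Qed.

Lemma count_iota_remove1 (p : pred nat) k N : k < N ->
  count p (iota 0 N) = p k + count (fun y => p y && (y != k)) (iota 0 N).
Proof.
move=> hk.
have -> : iota 0 N = iota 0 k ++ k :: iota k.+1 (N - k.+1).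
  by rewrite -[k :: _]/(iota k (N - k.+1).+1) -iotaD; congr iota; lia.
rewrite !count_cat /= eqxx /= andbF.
rewrite (@eq_in_count _ (fun y => p y && (y != k)) p (iota 0 k)); last first.
  by move=> y; rewrite mem_iota add0n => /andP[_ hy] /=; rewrite (ltn_eqF hy) andbT.
rewrite (@eq_in_count _ (fun y => p y && (y != k)) p (iota k.+1 _)); last first.
  by move=> y; rewrite mem_iota => /andP[hy _] /=; rewrite (gtn_eqF hy) andbT.
by rewrite add0n addnCA.
Qed.

(* After insertion, an old point y starts a short chord iff it did before,
   unless its short chord {y, y+1} was split by the new point j+1. *)
Lemma insert_chord_short F j y :
  (insert_chord F j (shift_up j y) == (shift_up j y).+1) =
  (F y == y.+1) && (y.+1 != j).
Proof.
rewrite /insert_chord shift_up_neq0 shift_up_neqS shift_upK /shift_up.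
by case_ifs; lia.
Qed.

Lemma short_count_insert N F j : j <= N ->
  short_count N.+2 (insert_chord F j) =
  short_count N F + (j == 0) - ((0 < j) && (F j.-1 == j)).
Proof.
move=> hj; rewrite /short_count (count_iota_insert _ hj) /=.
have -> : (insert_chord F j 0 == 1) = (j == 0) by [].
have -> : (insert_chord F j j.+1 == j.+2) = false by rewrite /insert_chord eqxx.
rewrite (eq_count (insert_chord_short F j)).
case: j hj => [|k] hk /=.
  by rewrite (@eq_count _ _ (fun y => F y == y.+1)) ?addn1 ?subn0 // => y; rewrite andbT.
rewrite (count_iota_remove1 (fun y => F y == y.+1) hk) !addn0 add0n addKn.
by apply: eq_count => y; rewrite eqSS.
Qed.

Definition involutions (N : nat) :=
  [set f : {ffun 'I_N -> 'I_N} | [forall x, (f (f x) == x) && (f x != x)]].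

Definition shorts N (f : {ffun 'I_N -> 'I_N}) := #|[set x : 'I_N | (f x : nat) == x.+1]|.

Definition inv_count N s := #|[set f in involutions N | shorts f == s]|.

(* Transport between finite functions on 'I_N and functions nat -> nat:
   outside [0, N) the values are irrelevant. *)
Definition to_nat_fun N (f : {ffun 'I_N -> 'I_N}) (y : nat) : nat :=
  if insub y is Some y' then val (f y') else y.

Definition of_nat_fun N (F : nat -> nat) : {ffun 'I_N -> 'I_N} :=
  [ffun x : 'I_N => insubd x (F x)].

Lemma to_nat_funE N (f : {ffun 'I_N -> 'I_N}) (x : 'I_N) : to_nat_fun f x = f x.
Proof. by rewrite /to_nat_fun valK. Qed.

Lemma of_nat_funK N (F : nat -> nat) : (forall y, y < N -> F y < N) ->
  forall y, y < N -> to_nat_fun (of_nat_fun N F) y = F y.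
Proof.
move=> HF y hy; have -> : y = val (Ordinal hy) by [].
by rewrite to_nat_funE ffunE val_insubd HF.
Qed.

Lemma to_nat_fun_inj N (f g : {ffun 'I_N -> 'I_N}) :
  (forall y, y < N -> to_nat_fun f y = to_nat_fun g y) -> f = g.
Proof.
move=> E; apply/ffunP => x; apply: val_inj.
by have := E x (ltn_ord x); rewrite !to_nat_funE.
Qed.

Lemma involutionsP N (f : {ffun 'I_N -> 'I_N}) :
  f \in involutions N <-> fpf_involution N (to_nat_fun f).
Proof.
rewrite inE; split.
- move=> /forallP Hf y hy; have -> : y = val (Ordinal hy) by [].
  have /andP[/eqP ff /eqP f_neq] := Hf (Ordinal hy).
  rewrite !to_nat_funE ff; split => //; last by move/val_inj.
- move=> Hf; apply/forallP => x; have [_ ff f_neq] := Hf x (ltn_ord x).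
  rewrite !to_nat_funE in ff f_neq.
  by apply/andP; split; apply/eqP; [apply: val_inj | move=> e; apply: f_neq; rewrite e].
Qed.

Lemma card_ord_count N (p : pred nat) : #|[set x : 'I_N | p x]| = count p (iota 0 N).
Proof.
rewrite -val_enum_ord count_map cardE /enum_mem size_filter filter_predT.
by apply: eq_count => x /=; rewrite inE.
Qed.

Lemma shortsE N (f : {ffun 'I_N -> 'I_N}) : shorts f = short_count N (to_nat_fun f).
Proof.
rewrite /shorts /short_count -card_ord_count; apply: eq_card => x.
by rewrite !inE to_nat_funE.
Qed.

Section Extensionality.
Variables (N : nat) (F G : nat -> nat).
Hypothesis FG : forall y, y < N -> F y = G y.

Lemma fpf_involution_ext : fpf_involution N F -> fpf_involution N G.
Proof.
move=> HF y hy; have [F_lt FF F_neq] := HF y hy.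
by rewrite -(FG hy) -(FG F_lt).
Qed.

Lemma short_count_ext : short_count N F = short_count N G.
Proof. by apply: eq_in_count => y; rewrite mem_iota => /andP[_ hy] /=; rewrite FG. Qed.

Lemma insert_chord_ext j : j <= N ->
  forall x, x < N.+2 -> insert_chord F j x = insert_chord G j x.
Proof.
move=> hj x hx; rewrite /insert_chord.
case: eqP => // /eqP x0; case: eqP => // /eqP xS.
by rewrite FG //; apply: shift_down_lt.
Qed.

End Extensionality.

Lemma remove_chord_ext N F G : (forall x, x < N.+2 -> F x = G x) -> (F 0).-1 <= N ->
  forall y, y < N -> remove_chord F y = remove_chord G y.
Proof.
move=> FG hj y hy; rewrite /remove_chord -(FG 0) // (FG (shift_up _ y)) //.
exact: shift_up_lt.
Qed.

Definition insert_ffun N (u : {ffun 'I_N -> 'I_N} * 'I_N.+1) : {ffun 'I_N.+2 -> 'I_N.+2} :=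
  of_nat_fun N.+2 (insert_chord (to_nat_fun u.1) u.2).

Definition inserted_shorts N (f : {ffun 'I_N -> 'I_N}) (j : nat) :=
  short_count N (to_nat_fun f) + (j == 0) - ((0 < j) && (to_nat_fun f j.-1 == j)).

Definition insertions N s :=
  [set u : {ffun 'I_N -> 'I_N} * 'I_N.+1 |
    (u.1 \in involutions N) && (inserted_shorts u.1 u.2 == s)].

Lemma in_insertions N s u :
  (u \in insertions N s) = (u.1 \in involutions N) && (inserted_shorts u.1 u.2 == s).
Proof. by rewrite in_set. Qed.

Section Insertion.
Variables (N : nat) (u : {ffun 'I_N -> 'I_N} * 'I_N.+1).
Hypothesis u_inv : u.1 \in involutions N.

Let u2_le : (u.2 : nat) <= N. Proof. by rewrite -ltnS ltn_ord. Qed.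

Lemma insert_ffunE x : x < N.+2 ->
  to_nat_fun (insert_ffun u) x = insert_chord (to_nat_fun u.1) u.2 x.
Proof.
move/involutionsP: u_inv => Hu; apply: of_nat_funK => y hy.
by have [] := insert_chord_fpf Hu u2_le hy.
Qed.

Lemma insert_ffun_inv : insert_ffun u \in involutions N.+2.
Proof.
apply/involutionsP; apply: (@fpf_involution_ext _ (insert_chord (to_nat_fun u.1) u.2)).
  by move=> x hx; rewrite insert_ffunE.
by apply: insert_chord_fpf u2_le; apply/involutionsP.
Qed.

Lemma insert_ffun_shorts : shorts (insert_ffun u) = inserted_shorts u.1 u.2.
Proof.
rewrite shortsE (@short_count_ext _ _ (insert_chord (to_nat_fun u.1) u.2)).
  exact: short_count_insert.
by move=> x hx; rewrite insert_ffunE.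
Qed.

End Insertion.

(* Removing the chord through 0 recovers both the position and the original
   involution. *)
Lemma insert_ffun_inj N s : {in insertions N s &, injective (@insert_ffun N)}.
Proof.
move=> [f j] [g k]; rewrite !in_insertions /= => /andP[Hf _] /andP[Hg _] E.
have Ef := @insert_ffunE N (f, j) Hf; have Eg := @insert_ffunE N (g, k) Hg.
have jk : j = k.
  by apply: val_inj; have := Ef 0 isT; rewrite E Eg //= /insert_chord /=; lia.
subst k; have hj : (j : nat) <= N by rewrite -ltnS ltn_ord.
congr pair; apply: to_nat_fun_inj => y hy.
rewrite -(remove_insert_chord (to_nat_fun f) j) -(remove_insert_chord (to_nat_fun g) j).
apply: (@remove_chord_ext N) => // x hx.
by rewrite -Ef // E Eg.
Qed.

(* Every involution of 'I_N.+2 arises from an insertion: remove the chord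
   through 0. *)
Lemma insert_ffun_onto N s :
  [set f in involutions N.+2 | shorts f == s] = (@insert_ffun N) @: insertions N s.
Proof.
apply/setP => g; rewrite in_set; apply/andP/imsetP; last first.
  move=> [u]; rewrite in_insertions => /andP[Hu /eqP Hs] ->.
  by rewrite insert_ffun_inv // insert_ffun_shorts // Hs.
move=> [Hg /eqP Hs]; have HG := Hg; move/involutionsP: HG => HG.
have [hj HF] := remove_chord_fpf HG.
set j := (to_nat_fun g 0).-1 in hj HF; set F := remove_chord _ in HF.
set f := of_nat_fun N F.
have Ef : forall y, y < N -> to_nat_fun f y = F y.
  by apply: of_nat_funK => y hy; have [] := HF y hy.
have Hf : f \in involutions N.
  by apply/involutionsP; apply: (fpf_involution_ext (F := F)) => // y hy; rewrite Ef.
have Ej : ((inord j : 'I_N.+1) : nat) = j by rewrite inordK.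
have Eg : insert_ffun (f, inord j) = g.
  apply: to_nat_fun_inj => x hx; rewrite insert_ffunE //= Ej.
  by rewrite (insert_chord_ext Ef hj hx); exact: (insert_remove_chord HG hx).
exists (f, inord j) => //.
by rewrite in_insertions /= Hf -Hs -Eg insert_ffun_shorts //= eqxx.
Qed.

Lemma inv_count_insertions N s : inv_count N.+2 s = #|insertions N s|.
Proof. by rewrite /inv_count insert_ffun_onto card_in_imset //; exact: insert_ffun_inj. Qed.

Lemma card_insertions N s :
  #|insertions N s| =
  \sum_(f in involutions N) #|[set j : 'I_N.+1 | inserted_shorts f j == s]|.
Proof.
rewrite -sum1_card (eq_bigl (fun u : {ffun 'I_N -> 'I_N} * 'I_N.+1 =>
  (u.1 \in involutions N) && (inserted_shorts u.1 u.2 == s))); last first.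
  by move=> u; rewrite in_insertions.
rewrite -(pair_big_dep (mem (involutions N)) (fun f (j : 'I_N.+1) => inserted_shorts f j == s)
                      (fun _ _ => 1)) /=.
by apply: eq_bigr => f _; rewrite -sum1_card; apply: eq_bigl => j; rewrite inE.
Qed.

Lemma count_sub_bool (c : pred nat) t s l :
  count (fun y => t - c y == s) l = (t.-1 == s) * count c l + (t == s) * count (predC c) l.
Proof.
elim: l => [|y l IH] /=; first lia.
by rewrite IH; case: (c y) => /=; rewrite ?subn1 ?subn0; lia.
Qed.

(* Among the N+1 insertion positions into an involution with t short chords,
   one (j = 0) yields t+1 short chords, t (those splitting a short chord)
   yield t-1, and the remaining N-t yield t. *)
Lemma card_positions N (f : {ffun 'I_N -> 'I_N}) s :
  let t := shorts f in
  #|[set j : 'I_N.+1 | inserted_shorts f j == s]| =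
  (t.+1 == s) + (t.-1 == s) * t + (t == s) * (N - t).
Proof.
rewrite /= (@card_ord_count N.+1 (fun j => inserted_shorts f j == s)) shortsE.
set t := short_count N (to_nat_fun f); set c := fun y => to_nat_fun f y == y.+1.
have -> : iota 0 N.+1 = 0 :: map (addn 1) (iota 0 N) by rewrite -iotaDl.
rewrite /= count_map.
rewrite (@eq_count _ _ (fun y => t - c y == s)); last first.
  by move=> y; rewrite /= /inserted_shorts -/t add1n /= addn0.
rewrite count_sub_bool.
have -> : count c (iota 0 N) = t by [].
have -> : count (predC c) (iota 0 N) = N - t.
  by rewrite -[in N - _](size_iota 0 N) -(count_predC c) addKn.
rewrite /inserted_shorts -/t /= subn0 addn1; lia.
Qed.

Lemma sum_indicator (T : finType) (A : {set T}) (P : pred T) c :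
  \sum_(i in A) (P i * c) = #|[set i in A | P i]| * c.
Proof.
rewrite (bigID P) /= [X in _ + X]big1 ?addn0; last by move=> i /andP[_ /negbTE ->].
rewrite (eq_bigr (fun _ => c)); last by move=> i /andP[_ ->]; rewrite mul1n.
by rewrite -sum_nat_const; apply: eq_bigl => i; rewrite !inE.
Qed.

Lemma inv_count_rec N s :
  inv_count N.+2 s = (0 < s) * inv_count N s.-1 + s.+1 * inv_count N s.+1 + (N - s) * inv_count N s.
Proof.
rewrite inv_count_insertions card_insertions.
rewrite (eq_bigr (fun f => ((shorts f).+1 == s) * 1 + ((shorts f == s.+1) * s.+1) +
          ((shorts f == s) * (N - s)))); last first.
  by move=> f _; rewrite card_positions; lia.
rewrite !big_split /= !sum_indicator.
congr (_ + _ + _); rewrite ?[_ * (N - s)]mulnC ?[_ * s.+1]mulnC //.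
case: s => [|s] /=.
  by rewrite muln1 mul0n; apply: eq_card0 => f; rewrite !inE /= andbF.
by rewrite muln1 mul1n /inv_count; apply: eq_card => f; rewrite !inE eqSS.
Qed.

Section Matchings.
Variable n : nat.
Local Notation N := (2 * n).
Implicit Types (f : {ffun 'I_N -> 'I_N}) (P : {set {set 'I_N}}).

Definition diagram_of f : {set {set 'I_N}} := [set [set x; f x] | x : 'I_N].

Definition partner_of P : {ffun 'I_N -> 'I_N} :=
  [ffun x => odflt x [pick y in pblock P x | y != x]].

Lemma involutionsE f : f \in involutions N -> forall x, f (f x) = x /\ f x != x.
Proof. by rewrite inE => /forallP Hf x; have /andP[/eqP -> ->] := Hf x. Qed.

Lemma block_of_mem f : f \in involutions N ->
  forall x z, z \in [set x; f x] -> [set z; f z] = [set x; f x].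
Proof.
move=> Hf x z /set2P[->|->] //.
by have [ffx _] := involutionsE Hf x; rewrite ffx setUC.
Qed.

Lemma diagram_of_chord f : f \in involutions N -> chord_diagram (diagram_of f).
Proof.
move=> Hf; apply/andP; split; [apply/and3P; split|].
- apply/eqP/setP => x; rewrite inE; apply/bigcupP; exists [set x; f x].
    by apply/imsetP; exists x.
  by rewrite set21.
- apply/trivIsetP => A B /imsetP[x _ ->] /imsetP[y _ ->] neq.
  apply/pred0P => z /=; apply/negbTE/negP => /andP[zx zy].
  by move/eqP: neq; apply; rewrite -(block_of_mem Hf zx) (block_of_mem Hf zy).
- by apply/negP => /imsetP[x _] e; have := set21 x (f x); rewrite -e inE.
- apply/forallP => B; apply/implyP => /imsetP[x _ ->].
  by have [_ neq] := involutionsE Hf x; rewrite cards2 (eq_sym x) neq.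
Qed.

Lemma pblock_diagram_of f x : f \in involutions N -> pblock (diagram_of f) x = [set x; f x].
Proof.
move=> Hf; have /andP[/and3P[_ tI _] _] := diagram_of_chord Hf.
by apply: def_pblock => //; [apply/imsetP; exists x | rewrite set21].
Qed.

Lemma diagram_ofK f : f \in involutions N -> partner_of (diagram_of f) = f.
Proof.
move=> Hf; apply/ffunP => x; rewrite ffunE pblock_diagram_of //.
case: pickP => [y /andP[/set2P[->|->] neq]|none] //=; first by rewrite eqxx in neq.
by have [_ neq] := involutionsE Hf x; have := none (f x); rewrite set22 neq.
Qed.

Lemma num_short_diagram_of f : f \in involutions N -> num_short (diagram_of f) = shorts f.
Proof.
move=> Hf; rewrite /num_short /shorts.
have -> : [set B in diagram_of f | short_chord B] =
    (fun x => [set x; f x]) @: [set x : 'I_N | (f x : nat) == x.+1].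
  apply/setP => B; rewrite inE; apply/andP/imsetP.
  - move=> [/imsetP[x _ ->] /existsP[i /existsP[j /andP[/eqP ji /eqP e]]]].
    have hi : i \in [set x; f x] by rewrite e set21.
    have Ei := block_of_mem Hf hi.
    have fij : f i = j.
      have : j \in [set i; f i] by rewrite Ei e set22.
      by case/set2P => [jeq|] //; move: ji; rewrite jeq; lia.
    by exists i; [rewrite inE fij ji | rewrite Ei].
  - move=> [x]; rewrite inE => /eqP hx ->; split; first by apply/imsetP; exists x.
    by apply/existsP; exists x; apply/existsP; exists (f x); rewrite hx !eqxx.
rewrite card_in_imset // => x y; rewrite !inE => /eqP hx /eqP hy e.
have : x \in [set y; f y] by rewrite -e set21.
have : y \in [set x; f x] by rewrite e set21.
case/set2P => [->//|e1]; case/set2P => [->//|e2].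
by apply: val_inj; move: hx hy; rewrite -e1 -e2; lia.
Qed.

Lemma partner_of_inv P : chord_diagram P ->
  partner_of P \in involutions N /\ forall x, pblock P x = [set x; partner_of P x].
Proof.
move=> /andP[/and3P[/eqP cov tI _] /forallP two].
have hmem x : x \in pblock P x by rewrite mem_pblock cov inE.
have hP x : pblock P x \in P by apply: pblock_mem; rewrite cov inE.
have hb x : pblock P x = [set x; partner_of P x] /\ partner_of P x != x.
  have /cards2P[a [b [ab e]]] := implyP (two (pblock P x)) (hP x).
  rewrite ffunE; case: pickP => [y /andP[hy neq]|none] /=.
    split => //; apply/eqP; rewrite eq_sym eqEcard; apply/andP; split.
      by apply/subsetP => z /set2P[->|->].
    by rewrite e cards2 ab cards2 eq_sym neq.
  exfalso; have := hmem x; rewrite e => /set2P[ex|ex].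
    by have := none b; rewrite e set22 ex (eq_sym b) ab.
  by have := none a; rewrite e set21 ex ab.
split; last by move=> x; have [] := hb x.
rewrite inE; apply/forallP => x; have [e1 neq] := hb x; rewrite neq andbT.
have [e2 neq2] := hb (partner_of P x).
have /(same_pblock tI) e3 : partner_of P x \in pblock P x by rewrite e1 set22.
have : partner_of P (partner_of P x) \in [set x; partner_of P x] by rewrite -e1 -e3 e2 set22.
by case/set2P => [->//|e4]; rewrite e4 eqxx in neq2.
Qed.

Lemma partner_ofK P : chord_diagram P -> diagram_of (partner_of P) = P.
Proof.
move=> cd; have [_ hb] := partner_of_inv cd.
move: cd => /andP[/and3P[/eqP cov tI _] /forallP two].
apply/setP => B; apply/imsetP/idP.
- by move=> [x _ ->]; rewrite -hb; apply: pblock_mem; rewrite cov inE.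
- move=> hB; have /cards2P[a [b [_ e]]] := implyP (two B) hB.
  by exists a => //; rewrite -hb; symmetry; apply: def_pblock => //; rewrite e set21.
Qed.

Lemma L_inv_count s : L n s = inv_count N s.
Proof.
rewrite /L /inv_count.
have -> : [set P : {set {set 'I_N}} | chord_diagram P && (num_short P == s)] =
    diagram_of @: [set f in involutions N | shorts f == s].
  apply/setP => P; rewrite inE; apply/andP/imsetP.
  - move=> [cd /eqP ns]; have [Hf _] := partner_of_inv cd.
    exists (partner_of P); last by rewrite partner_ofK.
    by rewrite inE Hf /= -ns -num_short_diagram_of // partner_ofK.
  - move=> [f]; rewrite inE => /andP[Hf /eqP hs] ->.
    by rewrite diagram_of_chord // num_short_diagram_of // hs.
rewrite card_in_imset // => f g.
rewrite inE => /andP[Hf _]; rewrite inE => /andP[Hg _] e.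
by rewrite -(diagram_ofK Hf) e diagram_ofK.
Qed.

End Matchings.

(* The recurrence for L, since diagrams with m + 1 chords live on 2m + 2 points. *)
Lemma L_rec m s :
  L m.+1 s = (0 < s) * L m s.-1 + s.+1 * L m s.+1 + (2 * m - s) * L m s.
Proof. by rewrite !L_inv_count (_ : 2 * m.+1 = (2 * m).+2) ?inv_count_rec //; lia. Qed.

Lemma L_zero s : L 0 s = (s == 0).
Proof.
rewrite L_inv_count /inv_count.
have inv0 (f : {ffun 'I_0 -> 'I_0}) : f \in involutions 0 /\ shorts f = 0.
  split; first by rewrite inE; apply/forallP => [[]].
  by apply: eq_card0 => [[]].
case: s => [|s] /=.
  rewrite (_ : [set f in involutions 0 | shorts f == 0] = setT).
    by rewrite cardsT card_ffun !card_ord.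
  by apply/setP => f; rewrite in_set in_setT; have [-> ->] := inv0 f.
by apply: eq_card0 => f; rewrite in_set; have [_ ->] := inv0 f; rewrite andbF.
Qed.

Lemma L_vanish m s : m < s -> L m s = 0.
Proof.
elim: m s => [|m IH] s hs; first by rewrite L_zero; case: s hs.
by rewrite L_rec !IH //; lia.
Qed.

(* The linear relation has coefficients of both signs: work in Z. *)
Open Scope Z_scope.
Local Notation LZ m s := (Z.of_nat (L m s)).

Lemma L_rec_Z0 m : LZ m.+1 0 = LZ m 1 + 2 * Z.of_nat m * LZ m 0.
Proof. by rewrite L_rec; lia. Qed.

(* In Z the factor 2m - s needs no truncation, thanks to L_vanish. *)
Lemma L_rec_Z m s : LZ m.+1 s.+1 =
  LZ m s + (Z.of_nat s + 2) * LZ m s.+2 + (2 * Z.of_nat m - Z.of_nat s - 1) * LZ m s.+1.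
Proof.
rewrite L_rec ltn0Sn mul1n succnK; case: (leqP s.+1 (2 * m)) => h; first by nia.
by rewrite (@L_vanish m s.+1) ?(@L_vanish m s.+2); nia.
Qed.

(* The recurrence carries the linear relation from level M to level M+1:
   the relation at s = S for the new values follows from the relations at
   s = S-1, S, S+1 for the old ones. *)
Lemma relation_step (S M am1 a0 a1 a2 a3 : Z) :
  S * (S+1) * a1 + S * (2*M-1-S) * a0 + (2*S-2-2*M) * am1 = 0 ->
  (S+1)*(S+2)*a2 + (S+1)*(2*M-2-S)*a1 + (2*S-2*M)*a0 = 0 ->
  (S+2)*(S+3)*a3 + (S+2)*(2*M-3-S)*a2 + (2*S+2-2*M)*a1 = 0 ->
  (S+1)*(S+2)*(a1 + (S+3)*a3 + (2*M-S-2)*a2) +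
  (S+1)*(2*(M+1)-2-S)*(a0 + (S+2)*a2 + (2*M-S-1)*a1) +
  (2*S-2*(M+1))*(am1 + (S+1)*a1 + (2*M-S)*a0) = 0.
Proof.
move=> H1 H2 H3.
have -> : (S+1)*(S+2)*(a1 + (S+3)*a3 + (2*M-S-2)*a2) +
  (S+1)*(2*(M+1)-2-S)*(a0 + (S+2)*a2 + (2*M-S-1)*a1) +
  (2*S-2*(M+1))*(am1 + (S+1)*a1 + (2*M-S)*a0) =
  (S+1) * ((S+2)*(S+3)*a3 + (S+2)*(2*M-3-S)*a2 + (2*S+2-2*M)*a1) +
  (2*M-S+1) * ((S+1)*(S+2)*a2 + (S+1)*(2*M-2-S)*a1 + (2*S-2*M)*a0) +
  (S * (S+1) * a1 + S * (2*M-1-S) * a0 + (2*S-2-2*M) * am1) by ring.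
by rewrite H1 H2 H3; ring.
Qed.

Lemma L_relation m s :
  (Z.of_nat s + 1) * (Z.of_nat s + 2) * LZ m s.+2 +
  (Z.of_nat s + 1) * (2 * Z.of_nat m - 2 - Z.of_nat s) * LZ m s.+1 +
  (2 * Z.of_nat s - 2 * Z.of_nat m) * LZ m s = 0.
Proof.
elim: m s => [|m IH] s; first by rewrite !L_zero; case: s => [|s] /=; lia.
case: s => [|s].
  have := relation_step (S := 0) (M := Z.of_nat m) (am1 := 0) (a0 := LZ m 0)
    (a1 := LZ m 1) (a2 := LZ m 2) (a3 := LZ m 3)
    ltac:(lia) ltac:(have := IH 0%nat; lia) ltac:(have := IH 1%nat; lia).
  by rewrite !L_rec_Z L_rec_Z0 !Nat2Z.inj_succ; lia.
have := relation_step (S := Z.of_nat s.+1) (M := Z.of_nat m) (am1 := LZ m s)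
  (a0 := LZ m s.+1) (a1 := LZ m s.+2) (a2 := LZ m s.+3) (a3 := LZ m s.+4)
  ltac:(have := IH s; rewrite !Nat2Z.inj_succ; lia)
  ltac:(have := IH s.+1; rewrite !Nat2Z.inj_succ; lia)
  ltac:(have := IH s.+2; rewrite !Nat2Z.inj_succ; lia).
by rewrite !L_rec_Z !Nat2Z.inj_succ; lia.
Qed.

Close Scope Z_scope.

(* The relation at s = 0 turns the recurrence for L_{m+1,1} into an identity. *)
Lemma L_one m : L m.+1 1 = L m.+1 0 + L m 0.
Proof.
apply: Nat2Z.inj; rewrite Nat2Z.inj_add L_rec_Z L_rec_Z0.
by have := L_relation m 0; lia.
Qed.

(* The relation at s = 0, together with L_one, gives L_{n,2} <= L_{n,1}. *)
Lemma L_two_le_one n : 1 <= n -> L n 2 <= L n 1.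
Proof.
case: n => [//|m] _.
have := L_relation m.+1 0; have := L_one m.
move/(f_equal Z.of_nat); rewrite Nat2Z.inj_add Nat2Z.inj_succ; nia.
Qed.

(* Beyond index 1 the coefficients are nonincreasing: the recurrence
   preserves this, the case i = 1 being L_two_le_one. *)
Lemma L_nonincreasing n i : 1 <= i -> L n i.+1 <= L n i.
Proof.
elim: n i => [|n IH] i hi; first by rewrite !L_zero.
case: i hi => [//|[|i]] _; first exact: L_two_le_one.
rewrite !L_rec /=.
have h2 := IH i.+2 isT; have h3 := IH i.+3 isT; have := IH i.+1 isT.
have p1 : i.+4 * L n i.+4 <= i.+4 * L n i.+3 by rewrite leq_mul2l h3 orbT.
have p2 : (2 * n - i.+3) * L n i.+3 + L n i.+3 <= (2 * n - i.+2) * L n i.+2.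
  case: (leqP i.+3 (2 * n)) => h; last by rewrite (@L_vanish n i.+3) ?muln0; lia.
  have -> : 2 * n - i.+2 = (2 * n - i.+3).+1 by lia.
  by have := leq_mul (leqnn (2 * n - i.+3)) h2; lia.
lia.
Qed.

Theorem theorem1 (n : nat) (hn : 1 <= n) :
  exists2 m : nat, m <= n &
    (forall i : nat, i < m -> L n i <= L n i.+1) /\
    (forall i : nat, m <= i < n -> L n i.+1 <= L n i).
Proof.
exists 1 => //; split.
- move=> i; rewrite ltnS leqn0 => /eqP ->.
  by case: n hn => [//|m] _; rewrite L_one leq_addr.
- by move=> i /andP[hi _]; exact: L_nonincreasing.
Qed.
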